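(* Let $s=1$, $n=3$, and $p_{ij}=1/6$ for all $i\neq j$. Let $\beta(x)=(1+x)^{-1}$ or $\beta(x)=e^{-x}$. Let $Y(t)$ be the solution of the gradient flow of relative entropy with initial data $y_1(0)=1$, $y_2(0)=0$, $y_3(0)=-1$. Then $Y(t)$ has the form $y_1(t)=X(t)$, $y_2(t)=0$, $y_3(t)=-X(t)$ with $0\le X(t)\le 1$, and there is a constant $C$ such that $\operatorname{diam}Y(t)\le C\,t^{-1/2}$ for all $t>0$; in particular $\operatorname{diam}Y(t)\to0$ as $t\to\infty$.
   Context: Let $\mathcal{P}_n=\{(i,j): i\neq j\}$ and $(p_{ij})$ a symmetric probability distribution on $\mathcal{P}_n$. For $Y=(y_1,\dots,y_n)\in(\mathbb{R}^s)^n$ define $q_{ij}=\beta(|y_i-y_j|^2)/\sum_{k\neq \ell}\beta(|y_k-y_\ell|^2)$. The gradient flow of relative entropy is the ODE system $$\frac{dy_i}{dt}=4\sum_{j\neq i}(p_{ij}-q_{ij})(y_i-y_j)(\log\beta)'(|y_i-y_j|^2),\qquad i=1,\dots,n.$$ $\operatorname{diam}Y=\max_{i,j}|y_i-y_j|$. *)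

From Stdlib Require Import Reals Lra.
From Coquelicot Require Import Coquelicot.
Open Scope R_scope.

(* Configurations in (R^1)^n are represented as y : nat -> R, using indices 0..n-1. *)

(* sum over ordered pairs (k,l) with k <> l, k,l in {0,...,n-1}; here n >= 1 *)
Definition sum_pairs (n : nat) (f : nat -> nat -> R) : R :=
  sum_f_R0 (fun k => sum_f_R0 (fun l => if Nat.eq_dec k l then 0 else f k l) (n - 1)) (n - 1).

Definition sum_ne (n i : nat) (f : nat -> R) : R :=
  sum_f_R0 (fun j => if Nat.eq_dec i j then 0 else f j) (n - 1).

(* q_ij = beta(|y_i - y_j|^2) / sum_{k<>l} beta(|y_k - y_l|^2)   (s = 1) *)
Definition qij (beta : R -> R) (n : nat) (y : nat -> R) (i j : nat) : R :=
  beta ((y i - y j) ^ 2) / sum_pairs n (fun k l => beta ((y k - y l) ^ 2)).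

Definition dlogbeta (beta : R -> R) (x : R) : R := Derive (fun u => ln (beta u)) x.

Definition flow_rhs (beta : R -> R) (p : nat -> nat -> R) (n : nat)
  (y : nat -> R) (i : nat) : R :=
  4 * sum_ne n i (fun j => (p i j - qij beta n y i j) * (y i - y j)
                             * dlogbeta beta ((y i - y j) ^ 2)).

Definition is_flow_solution (beta : R -> R) (p : nat -> nat -> R) (n : nat)
  (Y : R -> nat -> R) : Prop :=
  forall i, (i < n)%nat ->
    (forall t, 0 < t -> is_derive (fun s => Y s i) t (flow_rhs beta p n (Y t) i)) /\
    filterlim (fun s => Y s i) (at_right 0) (locally (Y 0 i)).

Fixpoint max_upto (f : nat -> R) (m : nat) : R :=
  match m with
  | O => f O
  | S m' => Rmax (max_upto f m') (f m)
  end.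

Definition diam (n : nat) (y : nat -> R) : R :=
  max_upto (fun i => max_upto (fun j => Rabs (y i - y j)) (n - 1)) (n - 1).

From Stdlib Require Import Reals Lra Lia.
From Coquelicot Require Import Coquelicot.
Open Scope R_scope.

(* The flow conserves the barycentre, and the energy [sum_i y_i^2] is
   nonincreasing because [beta] and [x (log beta)'(x)] are similarly ordered.
   Uniqueness of solutions is not assumed: instead the middle particle obeys
   [(y_2^2)' <= K y_2^2] by a Lipschitz estimate, so Gronwall keeps it at 0
   and the outer particles stay symmetric, [y_1 = - y_3 = X].  Then
   [X' = X phi] with [- K0 <= phi <= - c X^2], so [X] stays positive and
   [(1 / X^2)' >= 2 c], i.e. [X(t)^2 <= 1 / (1 + 2 c t)]; the diameter is
   [2 X = O(t^(-1/2))]. *)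

Lemma is_derive_val (f : R -> R) (x l l' : R) :
  is_derive f x l -> l = l' -> is_derive f x l'.
Proof. intros H <-; exact H. Qed.

(* Specializations to [R] of Coquelicot's generic rules, stated with the real
   operations so that [apply] and [ring] see through them. *)
Lemma is_derive_Rext (f h : R -> R) (x l : R) :
  (forall t, f t = h t) -> is_derive f x l -> is_derive h x l.
Proof. intros Hfh Hf; exact (is_derive_ext f h x l Hfh Hf). Qed.

Lemma is_derive_Rplus (f h : R -> R) (x df dh : R) :
  is_derive f x df -> is_derive h x dh -> is_derive (fun t => f t + h t) x (df + dh).
Proof. intros Hf Hh; exact (is_derive_plus f h x df dh Hf Hh). Qed.

Lemma is_derive_Ropp (f : R -> R) (x df : R) :
  is_derive f x df -> is_derive (fun t => - f t) x (- df).
Proof. intros Hf; exact (is_derive_opp f x df Hf). Qed.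

Lemma is_derive_Rmult (f h : R -> R) (x df dh : R) :
  is_derive f x df -> is_derive h x dh ->
  is_derive (fun t => f t * h t) x (df * h x + f x * dh).
Proof. intros Hf Hh; exact (is_derive_mult f h x df dh Hf Hh Rmult_comm). Qed.

Lemma is_derive_linear (k x : R) : is_derive (fun s => k * s) x k.
Proof. auto_derive; [easy | ring]. Qed.

Lemma is_derive_exp_scal (k x : R) : is_derive (fun s => exp (k * s)) x (k * exp (k * x)).
Proof. auto_derive; [easy | ring]. Qed.

Lemma continuity_pt_of_is_derive (f : R -> R) (x l : R) :
  is_derive f x l -> continuity_pt f x.
Proof. intros H; apply continuity_pt_filterlim, (ex_derive_continuous f x); now exists l. Qed.

Definition right_cont0 (f : R -> R) := filterlim f (at_right 0) (locally (f 0)).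

Lemma right_cont0_of_continuous (f : R -> R) : continuous f 0 -> right_cont0 f.
Proof. intros H; exact (filterlim_filter_le_1 f (filter_le_within _) H). Qed.

Lemma right_cont0_of_is_derive (f : R -> R) (l : R) : is_derive f 0 l -> right_cont0 f.
Proof. intros H; apply right_cont0_of_continuous, (ex_derive_continuous f); now exists l. Qed.

Lemma right_cont0_comp (phi f : R -> R) :
  continuous phi (f 0) -> right_cont0 f -> right_cont0 (fun t => phi (f t)).
Proof. intros Hphi Hf; exact (filterlim_comp _ _ _ f phi _ _ _ Hf Hphi). Qed.

Lemma right_cont0_plus (f h : R -> R) :
  right_cont0 f -> right_cont0 h -> right_cont0 (fun t => f t + h t).
Proof.
  intros Hf Hh; eapply filterlim_comp_2; [exact Hf | exact Hh |].
  exact (filterlim_plus (f 0) (h 0)).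
Qed.

Lemma right_cont0_mult (f h : R -> R) :
  right_cont0 f -> right_cont0 h -> right_cont0 (fun t => f t * h t).
Proof.
  intros Hf Hh; eapply filterlim_comp_2; [exact Hf | exact Hh |].
  exact (filterlim_mult (f 0) (h 0)).
Qed.

Lemma le_at0_of_derive_nonpos (f df : R -> R) :
  (forall t, 0 < t -> is_derive f t (df t)) -> right_cont0 f ->
  (forall t, 0 < t -> df t <= 0) -> forall t, 0 <= t -> f t <= f 0.
Proof.
  intros f_derive f_cont0 Hneg t Ht.
  destruct (Req_dec t 0) as [-> | Ht0]; [lra |].
  assert (Hdecr : forall s, 0 < s < t -> f t <= f s).
  { intros s Hs.
    destruct (MVT_gen f s t df) as [x [Hx Hmvt]];
      rewrite ?Rmin_left, ?Rmax_right in * by lra.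
    - intros x Hx; apply f_derive; lra.
    - intros x Hx; apply (continuity_pt_of_is_derive f x (df x)), f_derive; lra.
    - enough (df x <= 0) by nra. apply Hneg; lra. }
  apply (filterlim_le (F := at_right 0) (fun _ => f t) f (f t) (f 0)).
  - exists (mkposreal t ltac:(lra)); intros s Hs Hs0.
    apply Hdecr; split; [exact Hs0 |].
    apply Rabs_lt_between in Hs; unfold minus, plus, opp in Hs; simpl in Hs; lra.
  - apply filterlim_const.
  - exact f_cont0.
Qed.

Lemma eq_at0_of_derive_zero (f df : R -> R) :
  (forall t, 0 < t -> is_derive f t (df t)) -> right_cont0 f ->
  (forall t, 0 < t -> df t = 0) -> forall t, 0 <= t -> f t = f 0.
Proof.
  intros f_derive f_cont0 Hzero t Ht; apply Rle_antisym.
  - apply (le_at0_of_derive_nonpos f df f_derive f_cont0); [intros s Hs; rewrite Hzero |]; lra.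
  - enough (- f t <= - f 0) by lra.
    apply (le_at0_of_derive_nonpos (fun s => - f s) (fun s => - df s)); [| | | exact Ht].
    + intros s Hs; apply is_derive_Ropp, f_derive, Hs.
    + apply (right_cont0_comp Ropp f); [| exact f_cont0].
      apply (ex_derive_continuous Ropp); auto_derive; easy.
    + intros s Hs; rewrite Hzero; lra.
Qed.

(* Gronwall: [f t * exp (- K t)] is nonincreasing. *)
Lemma gronwall_at0 (f df : R -> R) (K : R) :
  (forall t, 0 < t -> is_derive f t (df t)) -> right_cont0 f ->
  (forall t, 0 < t -> df t <= K * f t) -> forall t, 0 <= t -> f t <= f 0 * exp (K * t).
Proof.
  intros f_derive f_cont0 Hle t Ht.
  assert (H : f t * exp (- K * t) <= f 0 * exp (- K * 0)).
  { apply (le_at0_of_derive_nonpos (fun s => f s * exp (- K * s))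
             (fun s => (df s - K * f s) * exp (- K * s))); [| | | exact Ht].
    - intros s Hs; eapply is_derive_val.
      + apply is_derive_Rmult; [apply f_derive, Hs | apply is_derive_exp_scal].
      + cbv beta; ring.
    - apply right_cont0_mult; [exact f_cont0 |].
      apply (right_cont0_of_is_derive _ _ (is_derive_exp_scal (- K) 0)).
    - intros s Hs; specialize (Hle s Hs); pose proof (exp_pos (- K * s)); nra. }
  rewrite Rmult_0_r, exp_0, Rmult_1_r in H.
  replace (f t) with (f t * exp (- K * t) * exp (K * t)).
  - pose proof (exp_pos (K * t)); nra.
  - rewrite Rmult_assoc, <- exp_plus; replace (- K * t + K * t) with 0 by ring.
    rewrite exp_0; ring.
Qed.

(* [velocity3 beta (dlogbeta beta) a b c] is the velocity of the particle at
   [a] when the other two sit at [b] and [c], for [p_ij = 1/6]; [mass3] is the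
   normalization [sum_(k <> l) beta (|y_k - y_l|^2)]. *)
Definition mass3 (beta : R -> R) (a b c : R) : R :=
  2 * (beta ((a - b) ^ 2) + beta ((b - c) ^ 2) + beta ((a - c) ^ 2)).

Definition velocity3 (beta g : R -> R) (a b c : R) : R :=
  4 * ((1 / 6 - beta ((a - b) ^ 2) / mass3 beta a b c) * (a - b) * g ((a - b) ^ 2)
     + (1 / 6 - beta ((a - c) ^ 2) / mass3 beta a b c) * (a - c) * g ((a - c) ^ 2)).

Lemma pow2_sub_sym (a b : R) : (b - a) ^ 2 = (a - b) ^ 2.
Proof. ring. Qed.

Lemma mass3_swap12 (beta : R -> R) (a b c : R) : mass3 beta b a c = mass3 beta a b c.
Proof. unfold mass3; rewrite (pow2_sub_sym a b); ring. Qed.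

Lemma mass3_rot (beta : R -> R) (a b c : R) : mass3 beta c a b = mass3 beta a b c.
Proof. unfold mass3; rewrite (pow2_sub_sym c a), (pow2_sub_sym c b); ring. Qed.

Lemma sum_pairs3 (beta : R -> R) (y : nat -> R) :
  sum_pairs 3 (fun k l => beta ((y k - y l) ^ 2)) = mass3 beta (y 0%nat) (y 1%nat) (y 2%nat).
Proof.
  unfold sum_pairs, mass3; cbn -[pow].
  rewrite (pow2_sub_sym (y 0%nat)), (pow2_sub_sym (y 0%nat) (y 2%nat)),
    (pow2_sub_sym (y 1%nat) (y 2%nat)); ring.
Qed.

Section FlowRhs3.

Variables (beta : R -> R) (y : nat -> R).

Lemma flow_rhs3_0 : flow_rhs beta (fun _ _ => 1 / 6) 3 y 0 =
  velocity3 beta (dlogbeta beta) (y 0%nat) (y 1%nat) (y 2%nat).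
Proof.
  unfold flow_rhs, sum_ne, qij, velocity3; rewrite sum_pairs3; cbn -[pow]; ring.
Qed.

Lemma flow_rhs3_1 : flow_rhs beta (fun _ _ => 1 / 6) 3 y 1 =
  velocity3 beta (dlogbeta beta) (y 1%nat) (y 0%nat) (y 2%nat).
Proof.
  unfold flow_rhs, sum_ne, qij, velocity3; rewrite mass3_swap12, sum_pairs3; cbn -[pow].
  rewrite (pow2_sub_sym (y 0%nat) (y 1%nat)); ring.
Qed.

Lemma flow_rhs3_2 : flow_rhs beta (fun _ _ => 1 / 6) 3 y 2 =
  velocity3 beta (dlogbeta beta) (y 2%nat) (y 0%nat) (y 1%nat).
Proof.
  unfold flow_rhs, sum_ne, qij, velocity3; rewrite mass3_rot, sum_pairs3; cbn -[pow].
  rewrite (pow2_sub_sym (y 0%nat) (y 2%nat)), (pow2_sub_sym (y 1%nat) (y 2%nat)); ring.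
Qed.

End FlowRhs3.

Definition lipschitz_on (h : R -> R) (L M : R) : Prop :=
  forall x y, Rabs x <= M -> Rabs y <= M -> Rabs (h x - h y) <= L * Rabs (x - y).

Definition similarly_ordered (f h : R -> R) : Prop :=
  forall x y, 0 <= x -> 0 <= y -> 0 <= (f x - f y) * (h x - h y).

Definition sym_rate (beta g : R -> R) (x : R) : R :=
  (beta (4 * x) - beta x) * (g x - 4 * g (4 * x)) / (2 * beta x + beta (4 * x)).

Section Velocity3.

Variables beta g : R -> R.
Hypothesis beta_pos : forall x, 0 <= x -> 0 < beta x.

Lemma mass3_pos (a b c : R) : 0 < mass3 beta a b c.
Proof.
  unfold mass3.
  pose proof (beta_pos _ (pow2_ge_0 (a - b))); pose proof (beta_pos _ (pow2_ge_0 (b - c))).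
  pose proof (beta_pos _ (pow2_ge_0 (a - c))); lra.
Qed.

Lemma velocity3_sum (a b c : R) :
  velocity3 beta g a b c + velocity3 beta g b a c + velocity3 beta g c a b = 0.
Proof.
  unfold velocity3; rewrite (mass3_swap12 beta a b c), (mass3_rot beta a b c).
  rewrite (pow2_sub_sym a b), (pow2_sub_sym a c), (pow2_sub_sym b c); ring.
Qed.

(* With [h x = x * g x], the energy derivative is [4 * sum_p (1/6 - q_p) h(d_p)]
   over the three pairs; it is nonpositive by Chebyshev's sum inequality, as
   [q_p] and [h(d_p)] are similarly ordered. *)
Lemma velocity3_energy_nonpos (a b c : R) :
  similarly_ordered beta (fun x => x * g x) ->
  a * velocity3 beta g a b c + b * velocity3 beta g b a c + c * velocity3 beta g c a b <= 0.
Proof.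
  intros Hmon; pose proof (mass3_pos a b c) as HS.
  unfold velocity3; rewrite (mass3_swap12 beta a b c), (mass3_rot beta a b c).
  rewrite (pow2_sub_sym a b), (pow2_sub_sym a c), (pow2_sub_sym b c).
  pose proof (Hmon _ _ (pow2_ge_0 (a - b)) (pow2_ge_0 (b - c))) as Hab_bc.
  pose proof (Hmon _ _ (pow2_ge_0 (a - b)) (pow2_ge_0 (a - c))) as Hab_ac.
  pose proof (Hmon _ _ (pow2_ge_0 (b - c)) (pow2_ge_0 (a - c))) as Hbc_ac.
  set (S := mass3 beta a b c) in *.
  assert (HSdef : S = 2 * (beta ((a - b) ^ 2) + beta ((b - c) ^ 2) + beta ((a - c) ^ 2)))
    by reflexivity.
  cbv beta in Hab_bc, Hab_ac, Hbc_ac.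
  set (B1 := beta ((a - b) ^ 2)) in *; set (B2 := beta ((b - c) ^ 2)) in *;
    set (B3 := beta ((a - c) ^ 2)) in *.
  set (G1 := g ((a - b) ^ 2)) in *; set (G2 := g ((b - c) ^ 2)) in *;
    set (G3 := g ((a - c) ^ 2)) in *.
  match goal with |- ?E <= 0 => replace E with
    (- (4 / (3 * S)) * ((B1 - B2) * ((a - b) ^ 2 * G1 - (b - c) ^ 2 * G2)
                      + (B1 - B3) * ((a - b) ^ 2 * G1 - (a - c) ^ 2 * G3)
                      + (B2 - B3) * ((b - c) ^ 2 * G2 - (a - c) ^ 2 * G3)))
    by (rewrite HSdef; field; lra) end.
  assert (0 < 4 / (3 * S)) by (apply Rdiv_lt_0_compat; lra).
  nra.
Qed.

Lemma velocity3_swap_eq (a b c : R) :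
  let h1 := fun u => u * g (u ^ 2) in
  let h2 := fun u => u * beta (u ^ 2) * g (u ^ 2) in
  velocity3 beta g b a c = 4 * ((h1 (b - c) - h1 (a - b)) / 6
                               - (h2 (b - c) - h2 (a - b)) / mass3 beta b a c).
Proof.
  intros h1 h2; pose proof (mass3_pos b a c).
  unfold velocity3, h1, h2; rewrite (pow2_sub_sym a b); field; lra.
Qed.

(* As [a + b + c = 0], the points [b - c] and [a - b] compared in
   [velocity3_swap_eq] are [3 b] apart. *)
Lemma velocity3_middle_le (a b c bm L1 L2 : R) :
  0 < bm -> (forall x, 0 <= x <= 4 -> bm <= beta x) ->
  lipschitz_on (fun u => u * g (u ^ 2)) L1 2 ->
  lipschitz_on (fun u => u * beta (u ^ 2) * g (u ^ 2)) L2 2 ->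
  a + b + c = 0 -> a ^ 2 + b ^ 2 + c ^ 2 <= 2 ->
  b * velocity3 beta g b a c <= 12 * (L1 / 6 + L2 / (6 * bm)) * b ^ 2.
Proof.
  intros Hbm Hlow Hlip1 Hlip2 Hsum Henergy.
  assert (HS : 6 * bm <= mass3 beta b a c).
  { unfold mass3.
    pose proof (Hlow ((b - a) ^ 2) ltac:(split; [apply pow2_ge_0 | nra])).
    pose proof (Hlow ((a - c) ^ 2) ltac:(split; [apply pow2_ge_0 | nra])).
    pose proof (Hlow ((b - c) ^ 2) ltac:(split; [apply pow2_ge_0 | nra])); lra. }
  assert (Hab : Rabs (a - b) <= 2) by (apply Rabs_le; split; nra).
  assert (Hbc : Rabs (b - c) <= 2) by (apply Rabs_le; split; nra).
  assert (H3b : Rabs (b - c - (a - b)) = 3 * Rabs b).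
  { replace (b - c - (a - b)) with (3 * b) by lra; rewrite Rabs_mult, Rabs_pos_eq; lra. }
  specialize (Hlip1 _ _ Hbc Hab); specialize (Hlip2 _ _ Hbc Hab).
  rewrite H3b in Hlip1, Hlip2; rewrite velocity3_swap_eq; cbv zeta beta in *.
  set (D1 := (b - c) * g ((b - c) ^ 2) - (a - b) * g ((a - b) ^ 2)) in *.
  set (D2 := (b - c) * beta ((b - c) ^ 2) * g ((b - c) ^ 2)
             - (a - b) * beta ((a - b) ^ 2) * g ((a - b) ^ 2)) in *.
  set (S := mass3 beta b a c) in *; pose proof (Rabs_pos b).
  assert (HD2S : Rabs D2 / S <= Rabs D2 / (6 * bm)).
  { apply Rmult_le_compat_l; [apply Rabs_pos | apply Rinv_le_contravar; lra]. }
  assert (HD2bm : Rabs D2 / (6 * bm) <= 3 * L2 * Rabs b / (6 * bm)).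
  { apply Rmult_le_compat_r; [left; apply Rinv_0_lt_compat |]; lra. }
  assert (Hv : Rabs (D1 / 6 - D2 / S) <= Rabs D1 / 6 + Rabs D2 / S).
  { eapply Rle_trans; [apply Rabs_triang |]; rewrite Rabs_Ropp.
    unfold Rdiv; rewrite !Rabs_mult, !Rabs_inv, (Rabs_pos_eq 6), (Rabs_pos_eq S) by lra.
    lra. }
  apply (Rle_trans _ (Rabs b * (4 * Rabs (D1 / 6 - D2 / S)))).
  - pose proof (Rle_abs (b * (D1 / 6 - D2 / S))) as Hb; rewrite Rabs_mult in Hb; lra.
  - replace (b ^ 2) with (Rabs b * Rabs b) by (rewrite <- pow2_abs; ring).
    apply (Rle_trans _ (Rabs b * (4 * (3 * L1 * Rabs b / 6 + 3 * L2 * Rabs b / (6 * bm))))).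
    + apply Rmult_le_compat_l; lra.
    + apply Req_le; field; lra.
Qed.

Lemma velocity3_symmetric (x : R) :
  velocity3 beta g x 0 (- x) = 2 / 3 * x * sym_rate beta g (x ^ 2).
Proof.
  unfold velocity3, mass3, sym_rate.
  replace ((x - 0) ^ 2) with (x ^ 2) by ring; replace ((0 - - x) ^ 2) with (x ^ 2) by ring;
    replace ((x - - x) ^ 2) with (4 * x ^ 2) by ring.
  pose proof (beta_pos (x ^ 2) (pow2_ge_0 x)).
  pose proof (beta_pos (4 * x ^ 2) ltac:(pose proof (pow2_ge_0 x); lra)).
  field; lra.
Qed.

End Velocity3.

Section ThreeParticles.

Variables (beta g : R -> R) (a b c : R -> R).
Hypothesis beta_pos : forall x, 0 <= x -> 0 < beta x.
Hypothesis a_derive : forall t, 0 < t -> is_derive a t (velocity3 beta g (a t) (b t) (c t)).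
Hypothesis b_derive : forall t, 0 < t -> is_derive b t (velocity3 beta g (b t) (a t) (c t)).
Hypothesis c_derive : forall t, 0 < t -> is_derive c t (velocity3 beta g (c t) (a t) (b t)).
Hypotheses (a_cont0 : right_cont0 a) (b_cont0 : right_cont0 b) (c_cont0 : right_cont0 c).
Hypothesis beta_similar : similarly_ordered beta (fun x => x * g x).

Lemma barycenter3_const t : 0 <= t -> a t + b t + c t = a 0 + b 0 + c 0.
Proof.
  apply (eq_at0_of_derive_zero (fun s => a s + b s + c s) (fun s =>
    velocity3 beta g (a s) (b s) (c s) + velocity3 beta g (b s) (a s) (c s)
    + velocity3 beta g (c s) (a s) (b s))).
  - intros s Hs; apply is_derive_Rplus; [apply is_derive_Rplus |]; auto.
  - apply right_cont0_plus; [apply right_cont0_plus |]; assumption.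
  - intros s _; apply velocity3_sum.
Qed.

Lemma energy3_le t : 0 <= t -> a t ^ 2 + b t ^ 2 + c t ^ 2 <= a 0 ^ 2 + b 0 ^ 2 + c 0 ^ 2.
Proof.
  apply (le_at0_of_derive_nonpos (fun s => a s ^ 2 + b s ^ 2 + c s ^ 2) (fun s =>
    2 * (a s * velocity3 beta g (a s) (b s) (c s) + b s * velocity3 beta g (b s) (a s) (c s)
         + c s * velocity3 beta g (c s) (a s) (b s)))).
  - intros s Hs; eapply is_derive_val.
    + apply is_derive_Rplus; [apply is_derive_Rplus |];
        apply (is_derive_pow _ 2); auto.
    + simpl; ring.
  - apply right_cont0_plus; [apply right_cont0_plus |];
      apply (right_cont0_comp (fun x => x ^ 2)); auto;
      apply (ex_derive_continuous (fun x => x ^ 2)); auto_derive; easy.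
  - intros s _.
    pose proof (velocity3_energy_nonpos beta g beta_pos (a s) (b s) (c s) beta_similar); lra.
Qed.

Lemma middle3_stays_zero (bm L1 L2 : R) t :
  0 < bm -> (forall x, 0 <= x <= 4 -> bm <= beta x) ->
  lipschitz_on (fun u => u * g (u ^ 2)) L1 2 ->
  lipschitz_on (fun u => u * beta (u ^ 2) * g (u ^ 2)) L2 2 ->
  a 0 + b 0 + c 0 = 0 -> a 0 ^ 2 + b 0 ^ 2 + c 0 ^ 2 <= 2 -> b 0 = 0 ->
  0 <= t -> b t = 0.
Proof.
  intros Hbm Hlow Hlip1 Hlip2 Hsum0 Hen0 Hb0 Ht.
  set (K := 12 * (L1 / 6 + L2 / (6 * bm))).
  assert (H : b t ^ 2 <= b 0 ^ 2 * exp (2 * K * t)).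
  { apply (gronwall_at0 (fun s => b s ^ 2)
             (fun s => 2 * (b s * velocity3 beta g (b s) (a s) (c s)))).
    - intros s Hs; eapply is_derive_val; [apply (is_derive_pow _ 2); auto | simpl; ring].
    - apply (right_cont0_comp (fun x => x ^ 2)); auto.
      apply (ex_derive_continuous (fun x => x ^ 2)); auto_derive; easy.
    - intros s Hs.
      pose proof (velocity3_middle_le beta g beta_pos (a s) (b s) (c s) bm L1 L2
        Hbm Hlow Hlip1 Hlip2) as Hmid.
      rewrite barycenter3_const in Hmid by lra.
      pose proof (energy3_le s ltac:(lra)).
      fold K in Hmid; specialize (Hmid Hsum0 ltac:(lra)); lra.
    - exact Ht. }
  rewrite Hb0 in H; simpl in H; rewrite Rmult_0_l in H.
  pose proof (pow2_ge_0 (b t)); nra.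
Qed.

End ThreeParticles.

Lemma is_derive_sqr_min0 (y : R) : is_derive (fun z => Rmin z 0 ^ 2) y (2 * Rmin y 0).
Proof.
  apply is_derive_Reals; intros eps Heps; exists (mkposreal eps Heps); intros h Hh0 Hh.
  simpl in Hh.
  assert (Hquad : Rabs (Rmin (y + h) 0 ^ 2 - Rmin y 0 ^ 2 - 2 * Rmin y 0 * h) <= h * h).
  { unfold Rmin; destruct (Rle_dec (y + h) 0), (Rle_dec y 0); apply Rabs_le; split; nra. }
  replace ((Rmin (y + h) 0 ^ 2 - Rmin y 0 ^ 2) / h - 2 * Rmin y 0)
    with ((Rmin (y + h) 0 ^ 2 - Rmin y 0 ^ 2 - 2 * Rmin y 0 * h) / h) by (field; exact Hh0).
  pose proof (Rabs_pos_lt h Hh0).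
  unfold Rdiv; rewrite Rabs_mult, Rabs_inv.
  apply (Rmult_lt_reg_r (Rabs h)); [lra |].
  rewrite Rmult_assoc, Rinv_l, Rmult_1_r by lra.
  replace (h * h) with (Rabs h * Rabs h) in Hquad
    by (rewrite <- Rabs_mult; apply Rabs_pos_eq; nra).
  nra.
Qed.

Section ScalarDecay.

Variables (x phi : R -> R) (K c : R).
Hypothesis x_derive : forall t, 0 < t -> is_derive x t (x t * phi t).
Hypothesis x_cont0 : right_cont0 x.
Hypothesis x_init : x 0 = 1.
Hypothesis phi_bounds : forall t, 0 < t -> - K <= phi t <= - c * x t ^ 2.
Hypothesis c_nonneg : 0 <= c.

(* [Rmin (x t) 0 ^ 2] is C^1 and vanishes exactly when [x t >= 0]. *)
Lemma decay_nonneg t : 0 <= t -> 0 <= x t.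
Proof.
  intros Ht.
  assert (H : Rmin (x t) 0 ^ 2 <= Rmin (x 0) 0 ^ 2).
  { apply (le_at0_of_derive_nonpos (fun s => Rmin (x s) 0 ^ 2)
             (fun s => x s * phi s * (2 * Rmin (x s) 0))); [| | | exact Ht].
    - intros s Hs; exact (is_derive_comp _ x s _ _ (is_derive_sqr_min0 (x s)) (x_derive s Hs)).
    - apply (right_cont0_comp (fun z => Rmin z 0 ^ 2)); [| exact x_cont0].
      apply (ex_derive_continuous (fun z => Rmin z 0 ^ 2)).
      exists (2 * Rmin (x 0) 0); apply is_derive_sqr_min0.
    - intros s Hs; pose proof (phi_bounds s Hs).
      assert (phi s <= 0) by (pose proof (Rmult_le_pos _ _ c_nonneg (pow2_ge_0 (x s))); lra).
      assert (0 <= x s * Rmin (x s) 0) by (unfold Rmin; destruct (Rle_dec (x s) 0); nra).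
      nra. }
  rewrite x_init, (Rmin_right 1 0) in H by lra.
  simpl in H; unfold Rmin in H; destruct (Rle_dec (x t) 0); nra.
Qed.

Lemma decay_pos t : 0 <= t -> 0 < x t.
Proof.
  intros Ht.
  assert (H : - x t ^ 2 <= - x 0 ^ 2 * exp (- (2 * K) * t)).
  { apply (gronwall_at0 (fun s => - x s ^ 2) (fun s => - (2 * x s ^ 2 * phi s)));
      [| | | exact Ht].
    - intros s Hs; eapply is_derive_val.
      + apply is_derive_Ropp, (is_derive_pow x 2), x_derive, Hs.
      + simpl; ring.
    - apply (right_cont0_comp (fun z => - z ^ 2)); [| exact x_cont0].
      apply (ex_derive_continuous (fun z => - z ^ 2)); auto_derive; easy.
    - intros s Hs; pose proof (phi_bounds s Hs); pose proof (pow2_ge_0 (x s)); nra. }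
  rewrite x_init in H; pose proof (exp_pos (- (2 * K) * t)).
  pose proof (decay_nonneg t Ht).
  destruct (Req_dec (x t) 0) as [E | E]; [rewrite E in H; simpl in H; lra | lra].
Qed.

(* [(1 / x^2)' = - 2 phi / x^2 >= 2 c]. *)
Lemma decay_sq_bound t : 0 <= t -> x t ^ 2 * (1 + 2 * c * t) <= 1.
Proof.
  intros Ht.
  assert (H : - / x t ^ 2 + 2 * c * t <= - / x 0 ^ 2 + 2 * c * 0).
  { apply (le_at0_of_derive_nonpos (fun s => - / x s ^ 2 + 2 * c * s)
             (fun s => 2 * (phi s / x s ^ 2 + c))); [| | | exact Ht].
    - intros s Hs; pose proof (decay_pos s ltac:(lra)); eapply is_derive_val.
      + apply is_derive_Rplus.
        * apply is_derive_Ropp, is_derive_inv; [apply (is_derive_pow x 2), x_derive, Hs |].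
          apply pow_nonzero; lra.
        * apply is_derive_linear.
      + simpl; field; lra.
    - apply right_cont0_plus.
      + apply (right_cont0_comp (fun z => - / z ^ 2)); [| exact x_cont0].
        rewrite x_init; apply (ex_derive_continuous (fun z => - / z ^ 2)).
        auto_derive; lra.
      + apply (right_cont0_of_is_derive _ (2 * c)).
        apply is_derive_linear.
    - intros s Hs; pose proof (phi_bounds s Hs); pose proof (decay_pos s ltac:(lra)).
      assert (0 < x s ^ 2) by (apply pow_lt; lra).
      enough (phi s / x s ^ 2 <= - c) by lra.
      apply Rle_div_l; lra. }
  rewrite x_init in H; pose proof (decay_pos t Ht).
  assert (0 < x t ^ 2) by (apply pow_lt; lra).
  assert (Hinv : 1 + 2 * c * t <= / x t ^ 2) by (rewrite pow1, Rinv_1, Rmult_0_r in H; lra).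
  apply (Rmult_le_compat_l (x t ^ 2)) in Hinv; [| lra].
  rewrite Rinv_r in Hinv by lra; exact Hinv.
Qed.

End ScalarDecay.

Lemma diam_nonneg (n : nat) (y : nat -> R) : 0 <= diam n y.
Proof.
  assert (Hmax : forall (f : nat -> R) m, 0 <= f 0%nat -> 0 <= max_upto f m).
  { intros f m Hf; induction m as [| m IH]; simpl; [exact Hf |].
    eapply Rle_trans; [exact IH | apply Rmax_l]. }
  apply Hmax, Hmax, Rabs_pos.
Qed.

Lemma diam3_symmetric_le (y : nat -> R) (x : R) :
  0 <= x -> y 0%nat = x -> y 1%nat = 0 -> y 2%nat = - x -> diam 3 y <= 2 * x.
Proof.
  intros Hx Hy0 Hy1 Hy2; unfold diam; simpl; rewrite Hy0, Hy1, Hy2.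
  repeat apply Rmax_lub; apply Rabs_le; lra.
Qed.

Lemma le_sqrt_div_of_sq_mul_le (x t M : R) :
  0 <= x -> 0 < t -> x ^ 2 * t <= M -> x <= sqrt M / sqrt t.
Proof.
  intros Hx Ht HM.
  rewrite <- sqrt_div_alt, <- (sqrt_pow2 x Hx) by exact Ht.
  apply sqrt_le_1_alt, (Rle_div_r (x ^ 2) M t Ht), HM.
Qed.

Lemma is_lim_div_sqrt (C : R) : is_lim (fun t => C / sqrt t) p_infty 0.
Proof.
  replace (Finite 0) with (Rbar_mult C (Rbar_inv p_infty)) by (simpl; f_equal; ring).
  apply is_lim_scal_l, is_lim_inv; [apply is_lim_sqrt_p, is_lim_id | discriminate].
Qed.

Lemma is_lim_0_of_le_div_sqrt (f : R -> R) (C : R) :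
  (forall t, 0 < t -> 0 <= f t <= C / sqrt t) -> is_lim f p_infty 0.
Proof.
  intros Hf; apply (is_lim_le_le_loc (fun _ => 0) (fun t => C / sqrt t)).
  - exists 0; exact Hf.
  - apply is_lim_const.
  - apply is_lim_div_sqrt.
Qed.

Section Collapse.

Variables (beta : R -> R) (bm L1 L2 c0 K0 : R).
Let g := dlogbeta beta.
Hypothesis beta_pos : forall x, 0 <= x -> 0 < beta x.
Hypothesis beta_similar : similarly_ordered beta (fun x => x * g x).
Hypothesis bm_pos : 0 < bm.
Hypothesis beta_low : forall x, 0 <= x <= 4 -> bm <= beta x.
Hypothesis lip1 : lipschitz_on (fun u => u * g (u ^ 2)) L1 2.
Hypothesis lip2 : lipschitz_on (fun u => u * beta (u ^ 2) * g (u ^ 2)) L2 2.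
Hypothesis c0_pos : 0 < c0.
Hypothesis rate_bounds : forall x, 0 <= x <= 1 -> - K0 <= sym_rate beta g x <= - c0 * x.

Variable Y : R -> nat -> R.
Hypothesis Y_flow : is_flow_solution beta (fun _ _ => 1 / 6) 3 Y.
Hypotheses (Y0_0 : Y 0 0%nat = 1) (Y0_1 : Y 0 1%nat = 0) (Y0_2 : Y 0 2%nat = -1).

Let a := fun s => Y s 0%nat.
Let b := fun s => Y s 1%nat.
Let c := fun s => Y s 2%nat.

Lemma collapse_derive_a t : 0 < t -> is_derive a t (velocity3 beta g (a t) (b t) (c t)).
Proof.
  intros Ht; unfold a, b, c, g; cbv beta; rewrite <- flow_rhs3_0.
  exact (proj1 (Y_flow 0%nat ltac:(lia)) t Ht).
Qed.

Lemma collapse_derive_b t : 0 < t -> is_derive b t (velocity3 beta g (b t) (a t) (c t)).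
Proof.
  intros Ht; unfold a, b, c, g; cbv beta; rewrite <- flow_rhs3_1.
  exact (proj1 (Y_flow 1%nat ltac:(lia)) t Ht).
Qed.

Lemma collapse_derive_c t : 0 < t -> is_derive c t (velocity3 beta g (c t) (a t) (b t)).
Proof.
  intros Ht; unfold a, b, c, g; cbv beta; rewrite <- flow_rhs3_2.
  exact (proj1 (Y_flow 2%nat ltac:(lia)) t Ht).
Qed.

Lemma collapse_cont0_a : right_cont0 a.
Proof. exact (proj2 (Y_flow 0%nat ltac:(lia))). Qed.

Lemma collapse_cont0_b : right_cont0 b.
Proof. exact (proj2 (Y_flow 1%nat ltac:(lia))). Qed.

Lemma collapse_cont0_c : right_cont0 c.
Proof. exact (proj2 (Y_flow 2%nat ltac:(lia))). Qed.

Lemma collapse_sum t : 0 <= t -> a t + b t + c t = 0.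
Proof.
  intros Ht; rewrite (barycenter3_const beta g a b c collapse_derive_a collapse_derive_b
    collapse_derive_c collapse_cont0_a collapse_cont0_b collapse_cont0_c t Ht).
  unfold a, b, c; lra.
Qed.

Lemma collapse_energy t : 0 <= t -> a t ^ 2 + b t ^ 2 + c t ^ 2 <= 2.
Proof.
  intros Ht; rewrite (energy3_le beta g a b c beta_pos collapse_derive_a collapse_derive_b
    collapse_derive_c collapse_cont0_a collapse_cont0_b collapse_cont0_c beta_similar t Ht).
  unfold a, b, c; rewrite Y0_0, Y0_1, Y0_2; lra.
Qed.

Lemma collapse_middle t : 0 <= t -> b t = 0.
Proof.
  apply (middle3_stays_zero beta g a b c beta_pos collapse_derive_a collapse_derive_b
    collapse_derive_c collapse_cont0_a collapse_cont0_b collapse_cont0_c beta_similar bm L1 L2);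
    try assumption.
  - apply collapse_sum; lra.
  - apply collapse_energy; lra.
Qed.

Lemma collapse_antisym t : 0 <= t -> c t = - a t.
Proof.
  intros Ht; pose proof (collapse_sum t Ht); rewrite collapse_middle in * by exact Ht; lra.
Qed.

Lemma collapse_outer_sq_le1 t : 0 <= t -> a t ^ 2 <= 1.
Proof.
  intros Ht; pose proof (collapse_energy t Ht).
  rewrite collapse_middle, collapse_antisym in * by exact Ht; nra.
Qed.

Let phi := fun t => 2 / 3 * sym_rate beta g (a t ^ 2).

Lemma collapse_outer_derive t : 0 < t -> is_derive a t (a t * phi t).
Proof.
  intros Ht; eapply is_derive_val; [apply collapse_derive_a, Ht |].
  rewrite collapse_middle, collapse_antisym, velocity3_symmetric by (auto; lra).
  unfold phi; ring.
Qed.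

Lemma collapse_rate_bounds t : 0 < t -> - (2 / 3 * K0) <= phi t <= - (2 / 3 * c0) * a t ^ 2.
Proof.
  intros Ht; pose proof (collapse_outer_sq_le1 t ltac:(lra)); pose proof (pow2_ge_0 (a t)).
  pose proof (rate_bounds (a t ^ 2) ltac:(lra)); unfold phi; lra.
Qed.

Lemma collapse_outer_nonneg t : 0 <= t -> 0 <= a t.
Proof.
  exact (decay_nonneg a phi _ _ collapse_outer_derive collapse_cont0_a Y0_0
    collapse_rate_bounds ltac:(lra) t).
Qed.

(* [X^2 <= 1 / (1 + 4/3 c0 t)] and [diam = 2 X] give the constant [sqrt (3 / c0)]. *)
Lemma collapse_diam_bound t : 0 < t -> 0 <= diam 3 (Y t) <= sqrt (3 / c0) / sqrt t.
Proof.
  intros Ht; split; [apply diam_nonneg |].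
  pose proof (collapse_outer_nonneg t ltac:(lra)) as Ha_nonneg.
  pose proof (decay_sq_bound a phi _ _ collapse_outer_derive collapse_cont0_a Y0_0
    collapse_rate_bounds ltac:(lra) t ltac:(lra)) as Ha_decay.
  apply (Rle_trans _ (2 * a t)).
  - apply diam3_symmetric_le; [exact Ha_nonneg | reflexivity | |];
      [apply collapse_middle | apply collapse_antisym]; lra.
  - apply le_sqrt_div_of_sq_mul_le; [lra | exact Ht |].
    apply (Rmult_le_reg_l c0); [exact c0_pos |].
    field_simplify; nra.
Qed.

Theorem flow3_symmetric_collapse :
  (exists X : R -> R, forall t, 0 <= t ->
      Y t 0%nat = X t /\ Y t 1%nat = 0 /\ Y t 2%nat = - X t /\ 0 <= X t <= 1) /\
  (exists C : R, forall t, 0 < t -> diam 3 (Y t) <= C / sqrt t) /\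
  is_lim (fun t => diam 3 (Y t)) p_infty 0.
Proof.
  split; [| split].
  - exists a; intros t Ht.
    pose proof (collapse_outer_nonneg t Ht); pose proof (collapse_outer_sq_le1 t Ht).
    repeat split; [apply collapse_middle | apply collapse_antisym | |]; auto; nra.
  - exists (sqrt (3 / c0)); intros t Ht; apply collapse_diam_bound, Ht.
  - exact (is_lim_0_of_le_div_sqrt _ _ collapse_diam_bound).
Qed.

End Collapse.

Lemma lipschitz_on_of_derive (h dh : R -> R) (L M : R) :
  (forall u, is_derive h u (dh u)) -> (forall u, Rabs u <= M -> Rabs (dh u) <= L) ->
  lipschitz_on h L M.
Proof.
  intros Hd Hbound x y Hx Hy.
  destruct (MVT_gen h y x dh) as [z [Hz Hmvt]].
  - intros z _; apply Hd.
  - intros z _; exact (continuity_pt_of_is_derive h z _ (Hd z)).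
  - rewrite Hmvt, Rabs_mult; apply Rmult_le_compat_r; [apply Rabs_pos |].
    apply Hbound, Rabs_le; apply Rabs_le_between in Hx, Hy.
    unfold Rmin, Rmax in Hz; destruct (Rle_dec y x); lra.
Qed.

Lemma exp_le_compat (x y : R) : x <= y -> exp x <= exp y.
Proof. intros [H | ->]; [left; apply exp_increasing, H | lra]. Qed.

Section Gauss.

Let beta := fun x => exp (- x).
Let g := dlogbeta beta.

Lemma dlogbeta_gauss (x : R) : g x = -1.
Proof.
  apply is_derive_unique, (is_derive_Rext (fun u => - u)).
  - intros u; unfold beta; rewrite ln_exp; reflexivity.
  - auto_derive; [easy | ring].
Qed.

Lemma gauss_similarly_ordered : similarly_ordered beta (fun x => x * g x).
Proof.
  intros x y _ _; cbv beta; rewrite !dlogbeta_gauss; unfold beta.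
  destruct (Rle_dec x y) as [Hxy | Hxy].
  - pose proof (exp_le_compat (- y) (- x) ltac:(lra)); nra.
  - pose proof (exp_le_compat (- x) (- y) ltac:(lra)); nra.
Qed.

Lemma gauss_lipschitz1 : lipschitz_on (fun u => u * g (u ^ 2)) 1 2.
Proof.
  apply (lipschitz_on_of_derive _ (fun _ => -1)).
  - intros u; apply (is_derive_Rext (fun u => - u)).
    + intros v; cbv beta; rewrite dlogbeta_gauss; ring.
    + auto_derive; [easy | ring].
  - intros u _; rewrite Rabs_left by lra; lra.
Qed.

Lemma gauss_lipschitz2 : lipschitz_on (fun u => u * beta (u ^ 2) * g (u ^ 2)) 7 2.
Proof.
  apply (lipschitz_on_of_derive _ (fun u => (2 * u ^ 2 - 1) * exp (- u ^ 2))).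
  - intros u; apply (is_derive_Rext (fun u => - (u * exp (- u ^ 2)))).
    + intros v; rewrite dlogbeta_gauss; unfold beta; ring.
    + auto_derive; [easy | simpl; ring].
  - intros u Hu; rewrite Rabs_mult, (Rabs_pos_eq (exp _)) by (left; apply exp_pos).
    assert (Hu2 : 0 <= u ^ 2 <= 4)
      by (split; [apply pow2_ge_0 | apply Rabs_le_between in Hu; nra]).
    assert (exp (- u ^ 2) <= 1) by (rewrite <- exp_0; apply exp_le_compat; lra).
    assert (Rabs (2 * u ^ 2 - 1) <= 7) by (apply Rabs_le; lra).
    pose proof (exp_pos (- u ^ 2)); pose proof (Rabs_pos (2 * u ^ 2 - 1)); nra.
Qed.

Lemma gauss_rate_bounds (x : R) : 0 <= x <= 1 -> - (3 / 2) <= sym_rate beta g x <= - (3 / 4) * x.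
Proof.
  intros Hx; unfold sym_rate; rewrite !dlogbeta_gauss; unfold beta.
  set (z := exp (- (3 * x))).
  assert (Hz : 0 < z) by apply exp_pos.
  assert (Hz1 : z * (1 + 3 * x) <= 1).
  { pose proof (exp_ineq1_le (3 * x)) as H3x.
    assert (Hinv : z * exp (3 * x) = 1)
      by (unfold z; rewrite <- exp_plus, Rplus_opp_l; apply exp_0).
    nra. }
  replace (exp (- (4 * x))) with (exp (- x) * z)
    by (unfold z; rewrite <- exp_plus; f_equal; ring).
  pose proof (exp_pos (- x)).
  replace ((exp (- x) * z - exp (- x)) * (-1 - 4 * -1) / (2 * exp (- x) + exp (- x) * z))
    with (3 * (z - 1) / (2 + z)) by (field; nra).
  split.
  - apply Rle_div_r; lra.
  - apply Rle_div_l; [lra | nra].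
Qed.

End Gauss.

Section Cauchy.

Let beta := fun x => / (1 + x).
Let g := dlogbeta beta.

Lemma dlogbeta_cauchy (x : R) : 0 <= x -> g x = - / (1 + x).
Proof.
  intros Hx; unfold g, dlogbeta, beta; apply is_derive_unique; auto_derive.
  - repeat split; [lra | apply Rinv_0_lt_compat; lra].
  - field; lra.
Qed.

Lemma cauchy_similarly_ordered : similarly_ordered beta (fun x => x * g x).
Proof.
  intros x y Hx Hy; cbv beta; rewrite (dlogbeta_cauchy x Hx), (dlogbeta_cauchy y Hy); unfold beta.
  replace ((/ (1 + x) - / (1 + y)) * (x * - / (1 + x) - y * - / (1 + y)))
    with (((y - x) / ((1 + x) * (1 + y))) ^ 2) by (field; lra).
  apply pow2_ge_0.
Qed.

Lemma cauchy_lipschitz1 : lipschitz_on (fun u => u * g (u ^ 2)) 1 2.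
Proof.
  apply (lipschitz_on_of_derive _ (fun u => (u ^ 2 - 1) / (1 + u ^ 2) ^ 2)).
  - intros u; pose proof (pow2_ge_0 u); apply (is_derive_Rext (fun u => - u / (1 + u ^ 2))).
    + intros v; rewrite (dlogbeta_cauchy _ (pow2_ge_0 v)); field; pose proof (pow2_ge_0 v); lra.
    + auto_derive; [lra | field; lra].
  - intros u _; pose proof (pow2_ge_0 u).
    rewrite Rabs_div by (apply pow_nonzero; lra); rewrite (Rabs_pos_eq ((1 + u ^ 2) ^ 2)) by nra.
    apply Rle_div_l; [nra |]; apply Rabs_le; split; nra.
Qed.

Lemma cauchy_lipschitz2 : lipschitz_on (fun u => u * beta (u ^ 2) * g (u ^ 2)) 3 2.
Proof.
  apply (lipschitz_on_of_derive _ (fun u => (3 * u ^ 2 - 1) / (1 + u ^ 2) ^ 3)).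
  - intros u; pose proof (pow2_ge_0 u); apply (is_derive_Rext (fun u => - u / (1 + u ^ 2) ^ 2)).
    + intros v; rewrite (dlogbeta_cauchy _ (pow2_ge_0 v)); unfold beta.
      field; pose proof (pow2_ge_0 v); lra.
    + auto_derive; [apply Rgt_not_eq; simpl in *; nra | field; lra].
  - intros u _; pose proof (pow2_ge_0 u).
    rewrite Rabs_div by (apply pow_nonzero; lra); rewrite (Rabs_pos_eq ((1 + u ^ 2) ^ 3)) by nra.
    apply Rle_div_l; [nra |]; apply Rabs_le; split; nra.
Qed.

Lemma cauchy_rate_bounds (x : R) : 0 <= x <= 1 -> - 3 <= sym_rate beta g x <= - (3 / 40) * x.
Proof.
  intros Hx; unfold sym_rate.
  rewrite (dlogbeta_cauchy x), (dlogbeta_cauchy (4 * x)) by lra; unfold beta.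
  replace ((/ (1 + 4 * x) - / (1 + x)) * (- / (1 + x) - 4 * - / (1 + 4 * x))
           / (2 * / (1 + x) + / (1 + 4 * x)))
    with (- (3 * x) / ((1 + x) * (1 + 4 * x) * (1 + 3 * x))) by (field; lra).
  assert (HD : 1 <= (1 + x) * (1 + 4 * x) * (1 + 3 * x) <= 40) by (split; nra).
  split.
  - apply Rle_div_r; nra.
  - apply Rle_div_l; nra.
Qed.

End Cauchy.

Theorem mainTheorem6 (beta : R -> R) (Y : R -> nat -> R) :
  (beta = (fun x => / (1 + x)) \/ beta = (fun x => exp (- x))) ->
  is_flow_solution beta (fun _ _ => 1 / 6) 3 Y ->
  Y 0 0%nat = 1 -> Y 0 1%nat = 0 -> Y 0 2%nat = -1 ->
  (exists X : R -> R, forall t, 0 <= t ->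
      Y t 0%nat = X t /\ Y t 1%nat = 0 /\ Y t 2%nat = - X t /\ 0 <= X t <= 1) /\
  (exists C : R, forall t, 0 < t -> diam 3 (Y t) <= C / sqrt t) /\
  is_lim (fun t => diam 3 (Y t)) p_infty 0.
Proof.
  intros [-> | ->].
  - apply (flow3_symmetric_collapse _ (/ 5) 1 3 (3 / 40) 3).
    + intros x Hx; apply Rinv_0_lt_compat; lra.
    + apply cauchy_similarly_ordered.
    + lra.
    + intros x Hx; apply Rinv_le_contravar; lra.
    + apply cauchy_lipschitz1.
    + apply cauchy_lipschitz2.
    + lra.
    + apply cauchy_rate_bounds.
  - apply (flow3_symmetric_collapse _ (exp (-4)) 1 7 (3 / 4) (3 / 2)).
    + intros x _; apply exp_pos.
    + apply gauss_similarly_ordered.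
    + apply exp_pos.
    + intros x Hx; apply exp_le_compat; lra.
    + apply gauss_lipschitz1.
    + apply gauss_lipschitz2.
    + lra.
    + apply gauss_rate_bounds.
Qed.
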